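(* Let $K$ be a field of characteristic $\neq 2$, $n\ge1$, and let $\mathcal C$ be an EACP over $K$ with natural basis $\{h_1,\dots,h_n,r\}$ and structural constants $a_{ij},b_i$. Suppose $\sum_{j=1}^n a_{ij}a_{jk}=0$ and $b_i=0$ for all $i,k=1,\dots,n$. Then $(xy)z=0$ and $x(yz)=0$ for all $x,y,z\in\mathcal C$.
   Context: An EACP over a field $K$ (characteristic $\neq 2$) is a $K$-algebra $\mathcal C$ with a basis $\{h_1,\dots,h_n,r\}$ (called a natural basis) whose multiplication is determined by bilinearity from $$h_ir=rh_i=\tfrac12\Big(\sum_{j=1}^n a_{ij}h_j+b_ir\Big),\qquad h_ih_j=0\ (i,j=1,\dots,n),\qquad rr=0,$$ for some constants $a_{ij},b_i\in K$. *)

From HB Require Import structures.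
From mathcomp Require Import all_boot all_order all_algebra.
Set Implicit Arguments. Unset Strict Implicit. Unset Printing Implicit Defensive.
Import Order.TTheory GRing.Theory Num.Theory.
Local Open Scope ring_scope.

(* Coordinate model of an EACP of dimension n+1 over K.
   Elements are row vectors 'rV[K]_(n.+1); the basis vector of index
   lift ord_max i (value i < n) is h_(i+1), and the basis vector of index
   ord_max is r. *)
Section EACP.
Variables (K : fieldType) (n : nat) (a : 'I_n -> 'I_n -> K) (b : 'I_n -> K).

Definition eacp_e (u : 'I_n.+1) : 'rV[K]_n.+1 := delta_mx 0 u.
Definition eacp_h (i : 'I_n) : 'rV[K]_n.+1 := eacp_e (lift ord_max i).
Definition eacp_r : 'rV[K]_n.+1 := eacp_e ord_max.

Definition eacp_hr (i : 'I_n) : 'rV[K]_n.+1 :=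
  (2%:R)^-1 *: (\sum_(j < n) a i j *: eacp_h j + b i *: eacp_r).

Definition eacp_table (u v : 'I_n.+1) : 'rV[K]_n.+1 :=
  match unlift ord_max u, unlift ord_max v with
  | Some i, None => eacp_hr i
  | None, Some i => eacp_hr i
  | _, _ => 0
  end.

Definition eacp_mul (x y : 'rV[K]_n.+1) : 'rV[K]_n.+1 :=
  \sum_(u < n.+1) \sum_(v < n.+1) (x 0 u * y 0 v) *: eacp_table u v.
End EACP.

From HB Require Import structures.
From mathcomp Require Import all_boot all_order all_algebra.
Import GRing.Theory.
Local Open Scope ring_scope.

(* Let M be the matrix of right multiplication by r, so that row h_i of M is
   h_i r.  Bilinearity gives x y = (y_r x + x_r y) M, hence the product is
   commutative.  When b = 0 the r-column of M vanishes and M^2 = 0 (its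
   h-block is A/2 with A^2 = 0).  So a product w = x y has w_r = 0, and then
   w z = z_r (w M) = z_r (x_r y + y_r x) M^2 = 0; commutativity gives the
   other bracketing. *)

Lemma sum_ord_lift_max (V : nmodType) n (F : 'I_n.+1 -> V) :
  \sum_(u < n.+1) F u = \sum_(i < n) F (lift ord_max i) + F ord_max.
Proof.
rewrite big_ord_recr /=; congr (_ + _); apply: eq_bigr => i _.
by congr F; apply: val_inj; rewrite /= /bump leqNgt ltn_ord.
Qed.

Section EacpMatrix.
Variables (K : fieldType) (n : nat) (a : 'I_n -> 'I_n -> K) (b : 'I_n -> K).

Definition mul_r_mx : 'M[K]_n.+1 :=
  \matrix_u if unlift ord_max u is Some i then eacp_hr a b i else 0.

Lemma row_mul_r_mx_lift i : row (lift ord_max i) mul_r_mx = eacp_hr a b i.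
Proof. by rewrite rowK liftK. Qed.

Lemma row_mul_r_mx_max : row ord_max mul_r_mx = 0.
Proof. by rewrite rowK unlift_none. Qed.

Lemma mul_r_mx_lift i v : mul_r_mx (lift ord_max i) v = eacp_hr a b i 0 v.
Proof. by rewrite mxE liftK. Qed.

Lemma mul_r_mx_max v : mul_r_mx ord_max v = 0.
Proof. by rewrite mxE unlift_none mxE. Qed.

Lemma eacp_hr_lift i k : eacp_hr a b i 0 (lift ord_max k) = a i k / 2%:R.
Proof.
rewrite !mxE summxE (bigD1 k) //= big1 => [|j /negbTE jk].
  by rewrite !mxE !eqxx eq_sym (negbTE (neq_lift _ _)) mulr1 mulr0 !addr0 mulrC.
by rewrite !mxE /= (inj_eq (@lift_inj _ _)) eq_sym jk mulr0.
Qed.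

Lemma eacp_hr_max i : eacp_hr a b i 0 ord_max = b i / 2%:R.
Proof.
rewrite !mxE summxE big1 => [|j _].
  by rewrite !eqxx mulr1 add0r mulrC.
by rewrite !mxE (negbTE (neq_lift _ _)) andbF mulr0.
Qed.

Lemma eacp_table_lift_lift i j :
  eacp_table a b (lift ord_max i) (lift ord_max j) = 0.
Proof. by rewrite /eacp_table !liftK. Qed.

Lemma eacp_table_lift_max i : eacp_table a b (lift ord_max i) ord_max = eacp_hr a b i.
Proof. by rewrite /eacp_table liftK unlift_none. Qed.

Lemma eacp_table_max_lift i : eacp_table a b ord_max (lift ord_max i) = eacp_hr a b i.
Proof. by rewrite /eacp_table liftK unlift_none. Qed.

Lemma eacp_table_max_max : eacp_table a b ord_max ord_max = 0.
Proof. by rewrite /eacp_table unlift_none. Qed.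

Lemma eacp_mulE x y :
  eacp_mul a b x y = (y 0 ord_max *: x + x 0 ord_max *: y) *m mul_r_mx.
Proof.
rewrite mulmx_sum_row sum_ord_lift_max row_mul_r_mx_max scaler0 addr0.
rewrite /eacp_mul sum_ord_lift_max [X in _ + X]sum_ord_lift_max.
rewrite eacp_table_max_max scaler0 addr0.
under eq_bigr => i _ do rewrite sum_ord_lift_max eacp_table_lift_max.
under eq_bigr => i _ do under eq_bigr => j _ do rewrite eacp_table_lift_lift scaler0.
under eq_bigr => i _ do rewrite big1_eq add0r.
under [X in _ + X]eq_bigr => i _ do rewrite eacp_table_max_lift.
rewrite -big_split /=; apply: eq_bigr => i _.
by rewrite row_mul_r_mx_lift !mxE -scalerDl mulrC (mulrC (x 0 _)).
Qed.

Lemma eacp_mulC x y : eacp_mul a b x y = eacp_mul a b y x.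
Proof. by rewrite !eacp_mulE addrC. Qed.

Hypothesis b0 : forall i, b i = 0.

Lemma mul_r_mx_col_max m (w : 'M_(m, n.+1)) i : (w *m mul_r_mx) i ord_max = 0.
Proof.
rewrite mxE sum_ord_lift_max mul_r_mx_max mulr0 addr0 big1 // => j _.
by rewrite mul_r_mx_lift eacp_hr_max b0 mul0r mulr0.
Qed.

Lemma eacp_mul_coord_max x y : eacp_mul a b x y 0 ord_max = 0.
Proof. by rewrite eacp_mulE mul_r_mx_col_max. Qed.

Hypothesis a2_eq0 : forall i k : 'I_n, \sum_(j < n) a i j * a j k = 0.

Lemma mul_r_mx_sqr : mul_r_mx *m mul_r_mx = 0.
Proof.
apply/matrixP => u w; rewrite !mxE.
case: (unliftP ord_max u) => [i ->|->]; last first.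
  by apply: big1 => v _; rewrite mul_r_mx_max mul0r.
rewrite sum_ord_lift_max mul_r_mx_lift eacp_hr_max b0 mul0r mul0r addr0.
case: (unliftP ord_max w) => [k ->|->]; last first.
  by apply: big1 => j _; rewrite !mul_r_mx_lift eacp_hr_max b0 mul0r mulr0.
under eq_bigr => j _ do rewrite !mul_r_mx_lift !eacp_hr_lift mulrACA -invfM.
by rewrite -mulr_suml a2_eq0 mul0r.
Qed.

Lemma eacp_mul_mull x y z : eacp_mul a b (eacp_mul a b x y) z = 0.
Proof.
rewrite eacp_mulE eacp_mul_coord_max scale0r addr0 eacp_mulE.
by rewrite -scalemxAl -mulmxA mul_r_mx_sqr mulmx0 scaler0.
Qed.

End EacpMatrix.

Theorem mainTheorem2 (K : fieldType) (n : nat)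
  (a : 'I_n -> 'I_n -> K) (b : 'I_n -> K) :
  (2%:R : K) != 0 ->
  (0 < n)%N ->
  (forall i k : 'I_n, \sum_(j < n) a i j * a j k = 0) ->
  (forall i : 'I_n, b i = 0) ->
  forall x y z : 'rV[K]_n.+1,
    eacp_mul a b (eacp_mul a b x y) z = 0 /\
    eacp_mul a b x (eacp_mul a b y z) = 0.
Proof.
move=> _ _ a2_eq0 b0 x y z; split; first exact: eacp_mul_mull.
by rewrite eacp_mulC; exact: eacp_mul_mull.
Qed.
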